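(* Let $\mathcal{M}=\langle S,\to,L\rangle$ be a labeled transition system, let $B\subseteq S\times S$ be a skipping simulation on $\mathcal{M}$, and let $s,u,w\in S$ with $sBw$, $s\to u$, and $\langle s,u\rangle$ a node of $\mathit{ranktCt}(\mathcal{M},s,w)$. Then $\mathit{size}(\mathit{ranktCt}(\mathcal{M},u,w))\prec\mathit{size}(\mathit{ranktCt}(\mathcal{M},s,w))$.
   Context: A labeled transition system is $\mathcal{M}=\langle S,\to,L\rangle$ where $S$ is a non-empty set of states, $\to\subseteq S\times S$ is left-total, and $L$ is a function with domain $S$. A fullpath is an infinite sequence $\sigma$ with $\sigma(i)\to\sigma(i+1)$ for all $i$; it starts at $\sigma(0)$. $w\to^{+}v$ means there is a finite path $w=v_0\to\cdots\to v_k=v$ with $k\ge1$. Let $\mathit{INC}$ be the set of strictly increasing infinite sequences of naturals starting at $0$. For a fullpath $\sigma$ and $\pi\in\mathit{INC}$ the $i$-th segment of $\sigma$ is $\sigma(\pi(i)),\dots,\sigma(\pi(i+1)-1)$. $\mathit{match}(B,\sigma,\delta)$ holds iff there exist $\pi,\xi\in\mathit{INC}$ such that for every $i$ and every state $x$ in the $i$-th segment of $\sigma$ w.r.t. $\pi$, $xB\delta(\xi(i))$. $B$ is a skipping simulation (SKS) iff for all $s,w$ with $sBw$: $L(s)=L(w)$, and for every fullpath $\sigma$ starting at $s$ there is a fullpath $\delta$ starting at $w$ with $\mathit{match}(B,\sigma,\delta)$. The computation tree $\mathit{ctree}(\mathcal{M},s)$ has as nodes finite sequences over $S$; it is the smallest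 tree such that $\langle s\rangle$ is the root, and if $\langle s,\dots,x\rangle$ is a node and $x\to y$ then $\langle s,\dots,x,y\rangle$ is a node whose parent is $\langle s,\dots,x\rangle$. For the SKS $B$: if not $sBw$, $\mathit{ranktCt}(\mathcal{M},s,w)$ is the empty tree; otherwise it is the largest subtree of $\mathit{ctree}(\mathcal{M},s)$ (containing the root) such that every non-root node $\langle s,\dots,x\rangle$ satisfies $xBw$ and, for all $v$ with $w\to^{+}v$, not $xBv$. (Every branch of this tree is finite.) For a tree $t$ all of whose branches are finite, ordinals are assigned to nodes by $\mathit{size}(t,x)=\bigcup_{c\text{ a child of }x}\mathit{size}(t,c)+1$ (von Neumann ordinals), and $\mathit{size}(\mathit{ranktCt}(\mathcal{M},s,w))=\mathit{size}(\mathit{ranktCt}(\mathcal{M},s,w),\langle s\rangle)$. $\prec$ is the strict order on ordinals. *)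

From Stdlib Require Import List Relations ClassicalEpsilon.
Import ListNotations.
Set Implicit Arguments.

Section LTS.
Variables (St Lab : Type) (R : St -> St -> Prop) (L : St -> Lab).

Definition left_total : Prop := forall x, exists y, R x y.

Definition fullpath (sigma : nat -> St) : Prop := forall i, R (sigma i) (sigma (S i)).

Definition INC (pi : nat -> nat) : Prop := pi 0 = 0 /\ forall i, pi i < pi (S i).

Definition matchB (B : St -> St -> Prop) (sigma delta : nat -> St) : Prop :=
  exists pi xi, INC pi /\ INC xi /\
    forall i k, pi i <= k < pi (S i) -> B (sigma k) (delta (xi i)).

Definition SKS (B : St -> St -> Prop) : Prop :=
  forall s w, B s w ->
    L s = L w /\
    forall sigma, fullpath sigma -> sigma 0 = s ->
      exists delta, fullpath delta /\ delta 0 = w /\ matchB B sigma delta.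

(* A tree is a predicate on nodes (finite sequences over S). *)
Fixpoint is_path (x : St) (q : list St) : Prop :=
  match q with
  | [] => True
  | y :: q' => R x y /\ is_path y q'
  end.

Definition ctree (s : St) (p : list St) : Prop :=
  exists q, p = s :: q /\ is_path s q.

(* ranktCt(M,s,w): empty unless s B w; otherwise the largest subtree of
   ctree(M,s) containing the root all of whose non-root nodes <s,..,x> satisfy
   x B w and (forall v, w ->+ v -> ~ x B v).  Since a node belongs to the largest
   such subtree iff it and all its non-root ancestors satisfy the condition,
   this is: every element after the root satisfies the condition. *)
Definition rank_cond (B : St -> St -> Prop) (w x : St) : Prop :=
  B x w /\ forall v, clos_trans St R w v -> ~ B x v.

Definition ranktCt (B : St -> St -> Prop) (s w : St) (p : list St) : Prop :=
  B s w /\ exists q, p = s :: q /\ is_path s q /\ Forall (rank_cond B w) q.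
End LTS.

(* OSup I f denotes the ordinal  U_{i in I} (f i + 1). *)
Inductive ord : Type :=
| OSup : forall (Ix : Type), (Ix -> ord) -> ord.

Fixpoint ole (a b : ord) {struct a} : Prop :=
  match a, b with
  | @OSup I0 f, @OSup J0 g => forall i, exists j, ole (f i) (g j)
  end.

Definition olt (a b : ord) : Prop :=
  match b with
  | @OSup J0 g => exists j, ole a (g j)
  end.

Section Size.
Variable S : Type.

Definition tchild (t : list S -> Prop) (c x : list S) : Prop :=
  t c /\ exists y, c = x ++ [y].

Fixpoint size_acc (t : list S -> Prop) (x : list S) (H : Acc (tchild t) x) {struct H} : ord :=
  match H with
  | Acc_intro _ h =>
      OSup (fun c : {c : list S | tchild t c x} =>
              size_acc (h (proj1_sig c) (proj2_sig c)))
  end.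

(* Total version: meaningful when every branch below x is finite (Acc);
   an arbitrary default (0) otherwise. *)
Definition size_node (t : list S -> Prop) (x : list S) : ord :=
  match excluded_middle_informative (Acc (tchild t) x) with
  | left H => size_acc H
  | right _ => OSup (fun e : False => match e with end)
  end.

Definition size_tree (t : list S -> Prop) (root : S) : ord := size_node t [root].
End Size.

(* A step s -> u inside ranktCt(s, w) embeds ranktCt(u, w) into ranktCt(s, w)
   below the child <s, u> (prefix every node with s), so the size of the former
   is bounded by that of the subtree at <s, u>, which is strictly below the size
   of the whole tree.  The only real content is that ranktCt(s, w) is well
   founded: an infinite branch would be a fullpath from s staying forever in the
   region where x B w but never x B v for w ->+ v, whereas the skipping
   simulation forces its second segment to be matched with a state strictly
   after w. *)

From Stdlib Require Import List Relations Classical ClassicalEpsilon.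
Import ListNotations.
Set Implicit Arguments.
Unset Strict Implicit.

Section TreeSize.
Variable St : Type.

Lemma not_Acc_has_not_Acc_child (t : list St -> Prop) (x : list St) :
  ~ Acc (tchild t) x -> exists c, tchild t c x /\ ~ Acc (tchild t) c.
Proof.
  intros Hx. apply NNPP. intros Hno. apply Hx. constructor. intros c Hc.
  apply NNPP. intros Hc'. apply Hno. exists c. auto.
Qed.

Lemma not_Acc_descending_chain (t : list St -> Prop) (x0 : list St) :
  ~ Acc (tchild t) x0 ->
  exists n : nat -> list St, n 0 = x0 /\ forall k, tchild t (n (S k)) (n k).
Proof.
  intros H0.
  assert (step : forall p : {x | ~ Acc (tchild t) x},
             {c | tchild t c (proj1_sig p) /\ ~ Acc (tchild t) c}).
  { intros [x Hx]. apply constructive_indefinite_description.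
    apply not_Acc_has_not_Acc_child. exact Hx. }
  pose (chain := fix chain (k : nat) : {x | ~ Acc (tchild t) x} :=
          match k with
          | 0 => exist _ x0 H0
          | S m => let c := step (chain m) in exist _ (proj1_sig c) (proj2 (proj2_sig c))
          end).
  exists (fun k => proj1_sig (chain k)). split; [reflexivity|].
  intros k. exact (proj1 (proj2_sig (step (chain k)))).
Qed.

Section Embedding.
Variables (t1 t2 : list St -> Prop) (f : list St -> list St).
Hypothesis f_tchild : forall c x, tchild t1 c x -> tchild t2 (f c) (f x).

Lemma Acc_tchild_of_embedding (x : list St) :
  Acc (tchild t2) (f x) -> Acc (tchild t1) x.
Proof.
  intros Hfx. remember (f x) as y eqn:Hy. revert x Hy.
  induction Hfx as [y _ IH]. intros x ->. constructor.
  intros c Hc. exact (IH _ (f_tchild Hc) c eq_refl).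
Qed.

Lemma size_acc_le_of_embedding :
  forall x (H1 : Acc (tchild t1) x) (H2 : Acc (tchild t2) (f x)),
    ole (size_acc H1) (size_acc H2).
Proof.
  fix IH 2. intros x [h1] [h2]. simpl. intros [c Hc].
  exists (exist _ (f c) (f_tchild Hc)). apply IH.
Qed.

Lemma size_node_lt_of_embedding (x y : list St) :
  Acc (tchild t2) y -> tchild t2 (f x) y -> olt (size_node t1 x) (size_node t2 y).
Proof.
  intros Hy Hchild.
  assert (Hx : Acc (tchild t1) x)
    by exact (Acc_tchild_of_embedding (Acc_inv Hy Hchild)).
  unfold size_node.
  destruct (excluded_middle_informative (Acc (tchild t1) x)) as [H1|]; [|contradiction].
  destruct (excluded_middle_informative (Acc (tchild t2) y)) as [[h2]|]; [|contradiction].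
  exists (exist _ (f x) Hchild). apply size_acc_le_of_embedding.
Qed.
End Embedding.
End TreeSize.

Section RankTree.
Variables (St Lab : Type) (R : St -> St -> Prop) (L : St -> Lab) (B : St -> St -> Prop).

Lemma is_path_snoc_last (q : list St) (a y d : St) :
  is_path R a (q ++ [y]) -> R (last (a :: q) d) y.
Proof.
  revert a. induction q as [|b q IH]; intros a H; simpl in *.
  - tauto.
  - exact (IH b (proj2 H)).
Qed.

Lemma fullpath_clos_trans (delta : nat -> St) :
  fullpath R delta -> forall n, clos_trans St R (delta 0) (delta (S n)).
Proof.
  intros Hd n. induction n as [|n IH].
  - apply t_step, Hd.
  - eapply t_trans; [exact IH | apply t_step, Hd].
Qed.

(* The first matched segment of sigma is [sigma 0 .. sigma (pi 1 - 1)]; the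
   second one starts at sigma (pi 1) with pi 1 >= 1 and is matched with
   delta (xi 1), where xi 1 >= 1, i.e. with a state reachable from w. *)
Lemma SKS_fullpath_leaves_rank_region (s w : St) (sigma : nat -> St) :
  SKS R L B -> B s w -> fullpath R sigma -> sigma 0 = s ->
  ~ (forall k, rank_cond R B w (sigma (S k))).
Proof.
  intros HB Hsw Hsigma Hs Hrank.
  destruct (proj2 (HB s w Hsw) sigma Hsigma Hs)
    as [delta [Hdelta [Hw [pi [xi [[Hpi0 Hpi] [[Hxi0 Hxi] Hmatch]]]]]]].
  assert (Hm := Hmatch 1 (pi 1) (conj (le_n _) (Hpi 1))).
  specialize (Hpi 0). specialize (Hxi 0). rewrite Hpi0 in Hpi. rewrite Hxi0 in Hxi.
  destruct (pi 1) as [|p]; [inversion Hpi|].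
  destruct (xi 1) as [|x]; [inversion Hxi|].
  apply (proj2 (Hrank p) (delta (S x))); [|exact Hm].
  rewrite <- Hw. apply fullpath_clos_trans, Hdelta.
Qed.

Lemma ranktCt_child_last (s w : St) (c x : list St) :
  tchild (ranktCt R B s w) c x -> x <> [] ->
  exists y, c = x ++ [y] /\ R (last x s) y /\ rank_cond R B w y.
Proof.
  intros [[_ [q [Hc [Hpath Hcond]]]] [y ->]] Hx.
  destruct x as [|a x]; [contradiction|].
  injection Hc as <- <-.
  exists y. split; [reflexivity|]. split.
  - eapply is_path_snoc_last, Hpath.
  - apply Forall_app in Hcond. destruct Hcond as [_ Hy]. now inversion Hy.
Qed.

Lemma ranktCt_root_Acc (s w : St) :
  SKS R L B -> B s w -> Acc (tchild (ranktCt R B s w)) [s].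
Proof.
  intros HB Hsw. apply NNPP. intros Hnot.
  destruct (not_Acc_descending_chain Hnot) as [n [Hn0 Hchain]].
  assert (Hne : forall k, n k <> []).
  { intros [|k]; [rewrite Hn0; discriminate|].
    destruct (Hchain k) as [_ [y ->]]. destruct (n k); discriminate. }
  set (sigma := fun k => last (n k) s).
  assert (Hstep : forall k, R (sigma k) (sigma (S k)) /\ rank_cond R B w (sigma (S k))).
  { intros k. unfold sigma.
    destruct (ranktCt_child_last (Hchain k) (Hne k)) as [y [-> Hy]].
    now rewrite last_last. }
  apply (SKS_fullpath_leaves_rank_region HB Hsw (sigma := sigma)).
  - intros k. apply Hstep.
  - unfold sigma. now rewrite Hn0.
  - intros k. apply Hstep.
Qed.

Lemma ranktCt_cons_tchild (s u w : St) :
  B s w -> R s u -> rank_cond R B w u ->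
  forall c x, tchild (ranktCt R B u w) c x -> tchild (ranktCt R B s w) (s :: c) (s :: x).
Proof.
  intros Hsw Hsu Hu c x [[Huw [q [-> [Hpath Hcond]]]] [y Hy]]. split.
  - split; [exact Hsw|]. exists (u :: q). repeat split; auto.
  - exists y. now rewrite Hy.
Qed.
End RankTree.

Unset Implicit Arguments.

Theorem lemma3 (S Lab : Type) (R : S -> S -> Prop) (L : S -> Lab)
  (Htot : left_total R) (B : S -> S -> Prop) (HB : SKS R L B)
  (s u w : S) (Hsw : B s w) (Hsu : R s u)
  (Hnode : ranktCt R B s w [s; u]) :
  olt (size_tree (ranktCt R B u w) u) (size_tree (ranktCt R B s w) s).
Proof.
  assert (Hu : rank_cond R B w u).
  { destruct Hnode as [_ [q [Hq [_ Hcond]]]]. injection Hq as <-.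
    now inversion Hcond. }
  apply (size_node_lt_of_embedding (ranktCt_cons_tchild Hsw Hsu Hu)).
  - exact (ranktCt_root_Acc HB Hsw).
  - split; [exact Hnode | now exists u].
Qed.
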